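(* Let $\Gamma\longrightarrow\Delta$ be a sequent that has a $\mathbf{C}^*$-proof of height $h$, and let $\Gamma'$ and $\Delta'$ be multisets of formulas such that $\hat{\Gamma}\subseteq\hat{\Gamma'}$ and $\hat{\Delta}\subseteq\hat{\Delta'}$, where for a multiset $\Sigma$ of formulas $\hat{\Sigma}$ denotes the set of formulas occurring in $\Sigma$. Then $\Gamma'\longrightarrow\Delta'$ has a $\mathbf{C}^*$-proof of height at most $h$.
   Context: Formulas are first-order formulas built from atomic formulas and the logical constants $\top$ (true) and $\bot$ (false), which are not counted as atomic, using $\land,\lor,\supset,\forall,\exists$; $\neg A$ abbreviates $A\supset\bot$. $B[t/x]$ denotes the result of replacing the free occurrences of $x$ in $B$ by the term $t$ (renaming bound variables as needed). A sequent $\Gamma\longrightarrow\Delta$ is a pair of finite multisets of formulas (antecedent $\Gamma$, succedent $\Delta$); $B,\Gamma$ denotes $\Gamma$ with one more occurrence of $B$ added. A sequent is an axiom if $\top\in\Delta$, or if some formula $A$ that is either $\bot$ or atomic occurs in both $\Gamma$ and $\Delta$. The rules for $\mathbf{C}^*$-proofs (premise(s) above, conclusion below, written premises $\Rightarrow$ conclusion) are the instances of the following schemata: $\bot$-R: $\Gamma\longrightarrow\Delta,\bot \ \Rightarrow\ \Gamma\longrightarrow\Delta,D$; $\land$-L$^*$: $B,D,\Gamma\longrightarrow\Delta\ \Rightarrow\ B\land D,\Gamma\longrightarrow\Delta$; $\lor$-L: $B,\Gamma\longrightarrow\Delta$ and $D,\Gamma\longrightarrow\Delta\ \Rightarrow\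 B\lor D,\Gamma\longrightarrow\Delta$; $\land$-R: $\Gamma\longrightarrow\Delta,B$ and $\Gamma\longrightarrow\Delta,D\ \Rightarrow\ \Gamma\longrightarrow\Delta,B\land D$; $\lor$-R$^*$: $\Gamma\longrightarrow\Delta,B,D\ \Rightarrow\ \Gamma\longrightarrow\Delta,B\lor D$; $\supset$-L$^*$: $\Gamma\longrightarrow B,\Delta$ and $D,\Gamma\longrightarrow\Delta\ \Rightarrow\ B\supset D,\Gamma\longrightarrow\Delta$; $\supset$-R: $B,\Gamma\longrightarrow\Delta,D\ \Rightarrow\ \Gamma\longrightarrow\Delta,B\supset D$; $\forall$-L$^*$: $\forall x P, P[t/x],\Gamma\longrightarrow\Delta\ \Rightarrow\ \forall x P,\Gamma\longrightarrow\Delta$ ($t$ any term); $\exists$-R$^*$: $\Gamma\longrightarrow\Delta,\exists x P,P[t/x]\ \Rightarrow\ \Gamma\longrightarrow\Delta,\exists x P$ ($t$ any term); $\exists$-L: $B[c/x],\Gamma\longrightarrow\Delta\ \Rightarrow\ \exists x B,\Gamma\longrightarrow\Delta$; $\forall$-R: $\Gamma\longrightarrow\Delta,B[c/x]\ \Rightarrow\ \Gamma\longrightarrow\Delta,\forall x B$; where in $\exists$-L and $\forall$-R the constant $c$ must not occur in the conclusion. A $\mathbf{C}^*$-proof of a sequent is a finite tree of sequents rooted at that sequent, whose leaves are axioms and whose internal nodes are conclusions of instances of these rules with their children as premises (no contraction rules). Height is the maximal number of sequents on a root-to-leaf path. *)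

(* First-order formulas with de Bruijn indices for variables,
   so that substitution B[t/x] is capture-avoiding by construction.
   Multisets of formulas are lists taken up to permutation. *)
From Stdlib Require Import List Permutation Arith.
Import ListNotations.

(* Terms: variables (de Bruijn indices; indices beyond the binding depth are
   free variables) and function symbols applied to arguments
   (constants are 0-ary function symbols). *)
Inductive term : Type :=
| Var : nat -> term
| Fn  : nat -> list term -> term.

Inductive form : Type :=
| Atom : nat -> list term -> form
| Top  : form
| Bot  : form
| And  : form -> form -> form
| Or   : form -> form -> form
| Imp  : form -> form -> form
| All  : form -> form
| Ex   : form -> form.

Definition Neg (A : form) : form := Imp A Bot.

Fixpoint lift_term (k : nat) (t : term) : term :=
  match t with
  | Var i => if k <=? i then Var (S i) else Var i
  | Fn f l => Fn f (map (lift_term k) l)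
  end.

Fixpoint subst_term (d : nat) (s : term) (t : term) : term :=
  match t with
  | Var i => if i =? d then s else if d <? i then Var (pred i) else Var i
  | Fn f l => Fn f (map (subst_term d s) l)
  end.

Fixpoint subst_form (d : nat) (s : term) (A : form) : form :=
  match A with
  | Atom p l => Atom p (map (subst_term d s) l)
  | Top => Top
  | Bot => Bot
  | And B C => And (subst_form d s B) (subst_form d s C)
  | Or B C => Or (subst_form d s B) (subst_form d s C)
  | Imp B C => Imp (subst_form d s B) (subst_form d s C)
  | All B => All (subst_form (S d) (lift_term 0 s) B)
  | Ex B => Ex (subst_form (S d) (lift_term 0 s) B)
  end.

(* P[t/x] where P is the body of a quantifier binding x (index 0) *)
Definition inst (P : form) (t : term) : form := subst_form 0 t P.

Fixpoint sym_in_term (c : nat) (t : term) : bool :=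
  match t with
  | Var _ => false
  | Fn f l => (f =? c) || existsb (sym_in_term c) l
  end.

Fixpoint sym_in_form (c : nat) (A : form) : bool :=
  match A with
  | Atom _ l => existsb (sym_in_term c) l
  | Top | Bot => false
  | And B C | Or B C | Imp B C => sym_in_form c B || sym_in_form c C
  | All B | Ex B => sym_in_form c B
  end.

Definition fresh_in (c : nat) (G D : list form) : Prop :=
  forall A, (In A G \/ In A D) -> sym_in_form c A = false.

Definition is_atomic (A : form) : Prop :=
  match A with Atom _ _ => True | _ => False end.

Definition is_axiom (G D : list form) : Prop :=
  In Top D \/ exists A, (A = Bot \/ is_atomic A) /\ In A G /\ In A D.

(* cproof G D h : the sequent G --> D has a C*-proof of height exactly h.
   Multisets are lists up to Permutation (the principal formula is
   extracted via Permutation). *)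
Inductive cproof : list form -> list form -> nat -> Prop :=
| cp_ax : forall G D, is_axiom G D -> cproof G D 1
| cp_botR : forall G D D0 X n,
    Permutation D (X :: D0) -> cproof G (Bot :: D0) n -> cproof G D (S n)
| cp_andL : forall G D G0 B C n,
    Permutation G (And B C :: G0) -> cproof (B :: C :: G0) D n -> cproof G D (S n)
| cp_orL : forall G D G0 B C n m,
    Permutation G (Or B C :: G0) -> cproof (B :: G0) D n -> cproof (C :: G0) D m ->
    cproof G D (S (max n m))
| cp_andR : forall G D D0 B C n m,
    Permutation D (And B C :: D0) -> cproof G (B :: D0) n -> cproof G (C :: D0) m ->
    cproof G D (S (max n m))
| cp_orR : forall G D D0 B C n,
    Permutation D (Or B C :: D0) -> cproof G (B :: C :: D0) n -> cproof G D (S n)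
| cp_impL : forall G D G0 B C n m,
    Permutation G (Imp B C :: G0) -> cproof G0 (B :: D) n -> cproof (C :: G0) D m ->
    cproof G D (S (max n m))
| cp_impR : forall G D D0 B C n,
    Permutation D (Imp B C :: D0) -> cproof (B :: G) (C :: D0) n -> cproof G D (S n)
| cp_allL : forall G D G0 P t n,
    Permutation G (All P :: G0) -> cproof (All P :: inst P t :: G0) D n -> cproof G D (S n)
| cp_exR : forall G D D0 P t n,
    Permutation D (Ex P :: D0) -> cproof G (Ex P :: inst P t :: D0) n -> cproof G D (S n)
| cp_exL : forall G D G0 B c n,
    Permutation G (Ex B :: G0) -> fresh_in c G D ->
    cproof (inst B (Fn c []) :: G0) D n -> cproof G D (S n)
| cp_allR : forall G D D0 B c n,
    Permutation D (All B :: D0) -> fresh_in c G D ->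
    cproof G (inst B (Fn c []) :: D0) n -> cproof G D (S n).

Definition set_incl (S S' : list form) : Prop := forall A, In A S -> In A S'.

From Stdlib Require Import List Permutation Arith Lia Bool.
Import ListNotations.

(* Without contraction the inclusions cannot be carried through a naive
   induction on h: if Γ = A∧B, A∧B, Σ and Γ' = A∧B, Σ, the premise
   A, B, A∧B, Σ of ∧-L is not included in the premise A, B, Σ obtained by
   replaying the rule on Γ'.  We therefore replace inclusion by a cover
   relation under which a formula is also covered when its immediate
   components are, as its own rule would decompose it.  Going up a proof,
   either the principal formula occurs in Γ' (resp. Δ') and the rule is
   replayed there, or it is covered through its components and we pass
   directly to a premise.  Eigenconstants are exchanged for fresh ones by
   renaming function symbols, which preserves heights; ⊥-R is simulated by
   weakening with ⊥ and then removing that ⊥, which costs exactly the one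
   inference that ⊥-R itself used. *)

Lemma existsb_false_In {A} (p : A -> bool) l x :
  existsb p l = false -> In x l -> p x = false.
Proof.
  intros Hl Hx. apply not_true_iff_false. intro Hp.
  rewrite <- not_true_iff_false in Hl. apply Hl, existsb_exists. eauto.
Qed.

Lemma le_list_max n l : In n l -> n <= list_max l.
Proof.
  intros Hn. assert (Hall := proj1 (list_max_le l _) (le_n _)).
  rewrite Forall_forall in Hall. auto.
Qed.

Lemma in_perm {A} (x : A) l : In x l -> exists l', Permutation l (x :: l').
Proof.
  intros Hx. apply in_split in Hx as [l1 [l2 ->]]. exists (l1 ++ l2).
  apply Permutation_sym, Permutation_middle.
Qed.

Lemma Permutation_cons_cons_inv {A} (x y : A) l1 l2 :
  Permutation (x :: l1) (y :: l2) ->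
  x = y /\ Permutation l1 l2 \/
  exists l3, Permutation l1 (y :: l3) /\ Permutation l2 (x :: l3).
Proof.
  intros HP. destruct (Permutation_in _ (Permutation_sym HP) (in_eq y l2)) as [<- | Hy].
  - left. split; [reflexivity | exact (Permutation_cons_inv HP)].
  - right. apply in_split in Hy as [l4 [l5 ->]]. exists (l4 ++ l5). split.
    + apply Permutation_sym, Permutation_middle.
    + apply (Permutation_cons_inv (a := y)). rewrite <- HP.
      rewrite perm_swap. apply perm_skip, Permutation_sym, Permutation_middle.
Qed.

Lemma Permutation_cons_under {A} (a : A) {b : A} {l l' : list A} :
  Permutation l (b :: l') -> Permutation (a :: l) (b :: a :: l').
Proof. intros HP. rewrite HP. apply perm_swap. Qed.

(** * Renaming function symbols *)

Fixpoint term_nested_ind (P : term -> Prop) (HV : forall i, P (Var i))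
  (HF : forall f l, Forall P l -> P (Fn f l)) (t : term) : P t :=
  match t with
  | Var i => HV i
  | Fn f l => HF f l ((fix go (l : list term) : Forall P l :=
       match l with
       | [] => Forall_nil P
       | u :: r => Forall_cons u (term_nested_ind P HV HF u) (go r)
       end) l)
  end.

Fixpoint rename_term (s : nat -> nat) (t : term) : term :=
  match t with
  | Var i => Var i
  | Fn f l => Fn (s f) (map (rename_term s) l)
  end.

Fixpoint rename_form (s : nat -> nat) (A : form) : form :=
  match A with
  | Atom p l => Atom p (map (rename_term s) l)
  | Top => Top
  | Bot => Bot
  | And B C => And (rename_form s B) (rename_form s C)
  | Or B C => Or (rename_form s B) (rename_form s C)
  | Imp B C => Imp (rename_form s B) (rename_form s C)
  | All B => All (rename_form s B)
  | Ex B => Ex (rename_form s B)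
  end.

Definition update_sym (s : nat -> nat) (c e : nat) : nat -> nat :=
  fun f => if f =? c then e else s f.

Lemma rename_term_lift s k t :
  rename_term s (lift_term k t) = lift_term k (rename_term s t).
Proof.
  induction t as [i | f l IHl] using term_nested_ind; simpl.
  - destruct (k <=? i); reflexivity.
  - rewrite !map_map. f_equal. apply map_ext_Forall. exact IHl.
Qed.

Lemma rename_term_subst s d u t :
  rename_term s (subst_term d u t) = subst_term d (rename_term s u) (rename_term s t).
Proof.
  induction t as [i | f l IHl] using term_nested_ind; simpl.
  - destruct (i =? d); [reflexivity|]. destruct (d <? i); reflexivity.
  - rewrite !map_map. f_equal. apply map_ext_Forall. exact IHl.
Qed.

Lemma rename_form_subst s A : forall d u,
  rename_form s (subst_form d u A) = subst_form d (rename_term s u) (rename_form s A).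
Proof.
  induction A; intros d u; simpl; f_equal; auto;
    try (rewrite IHA, rename_term_lift; reflexivity).
  rewrite !map_map. apply map_ext. intro t. apply rename_term_subst.
Qed.

Lemma rename_form_inst s B t :
  rename_form s (inst B t) = inst (rename_form s B) (rename_term s t).
Proof. apply rename_form_subst. Qed.

Lemma rename_term_update s c e t :
  sym_in_term c t = false -> rename_term (update_sym s c e) t = rename_term s t.
Proof.
  induction t as [i | f l IHl] using term_nested_ind; simpl; intros Hc; [reflexivity|].
  apply orb_false_iff in Hc as [Hf Hl]. unfold update_sym at 1. rewrite Hf. f_equal.
  apply map_ext_Forall. rewrite Forall_forall in *. intros u Hu.
  apply IHl; [exact Hu|]. exact (existsb_false_In _ _ _ Hl Hu).
Qed.

Lemma rename_form_update s c e A :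
  sym_in_form c A = false -> rename_form (update_sym s c e) A = rename_form s A.
Proof.
  induction A; simpl; intros Hc; try apply orb_false_iff in Hc as [H1 H2];
    f_equal; auto.
  apply map_ext_in. intros t Ht. apply rename_term_update, (existsb_false_In _ _ _ Hc Ht).
Qed.

Lemma rename_term_id t : rename_term (fun f => f) t = t.
Proof.
  induction t as [i | f l IHl] using term_nested_ind; simpl; [reflexivity|].
  f_equal. rewrite <- (map_id l) at 2. apply map_ext_Forall. exact IHl.
Qed.

Lemma rename_form_id A : rename_form (fun f => f) A = A.
Proof.
  induction A; simpl; f_equal; auto.
  rewrite <- (map_id l) at 2. apply map_ext, rename_term_id.
Qed.

Definition avoids (c : nat) (L : list form) : Prop :=
  Forall (fun A => sym_in_form c A = false) L.

Lemma fresh_in_avoids c G D : fresh_in c G D <-> avoids c G /\ avoids c D.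
Proof. unfold fresh_in, avoids. rewrite !Forall_forall. firstorder. Qed.

Lemma fresh_in_perm c G G1 D D1 :
  Permutation G G1 -> Permutation D D1 -> fresh_in c G D -> fresh_in c G1 D1.
Proof.
  rewrite !fresh_in_avoids. intros HG HD [AG AD].
  split; eapply Permutation_Forall; eauto.
Qed.

Lemma fresh_in_incl c G G1 D D1 :
  incl G1 G -> incl D1 D -> fresh_in c G D -> fresh_in c G1 D1.
Proof. intros HG HD Hc A [HA | HA]; apply Hc; auto. Qed.

Lemma fresh_in_perm_tail_r c G D A D1 :
  Permutation D (A :: D1) -> fresh_in c G D -> fresh_in c G D1.
Proof.
  intros HP. apply fresh_in_incl; [apply incl_refl |].
  intros B HB. exact (Permutation_in _ (Permutation_sym HP) (in_cons _ _ _ HB)).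
Qed.

Lemma map_rename_update s c e L :
  avoids c L -> map (rename_form (update_sym s c e)) L = map (rename_form s) L.
Proof.
  intros Hc. apply map_ext_Forall. eapply Forall_impl; [|exact Hc].
  intros A. apply rename_form_update.
Qed.

Lemma rename_inst_eigen s c e B : sym_in_form c B = false ->
  rename_form (update_sym s c e) (inst B (Fn c [])) = inst (rename_form s B) (Fn e []).
Proof.
  intros Hc. rewrite rename_form_inst, rename_form_update by exact Hc.
  simpl. unfold update_sym. rewrite Nat.eqb_refl. reflexivity.
Qed.

Fixpoint max_sym_term (t : term) : nat :=
  match t with
  | Var _ => 0
  | Fn f l => max f (list_max (map max_sym_term l))
  end.

Fixpoint max_sym_form (A : form) : nat :=
  match A with
  | Atom _ l => list_max (map max_sym_term l)
  | Top | Bot => 0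
  | And B C | Or B C | Imp B C => max (max_sym_form B) (max_sym_form C)
  | All B | Ex B => max_sym_form B
  end.

Lemma sym_in_term_le c t : sym_in_term c t = true -> c <= max_sym_term t.
Proof.
  induction t as [i | f l IHl] using term_nested_ind; simpl; [discriminate|].
  rewrite orb_true_iff, Nat.eqb_eq, existsb_exists. rewrite Forall_forall in IHl.
  intros [-> | [u [Hu Hc]]]; [lia|].
  assert (max_sym_term u <= list_max (map max_sym_term l))
    by (apply le_list_max, in_map, Hu).
  specialize (IHl u Hu Hc). lia.
Qed.

Lemma sym_in_form_le c A : sym_in_form c A = true -> c <= max_sym_form A.
Proof.
  induction A; simpl; try rewrite orb_true_iff; try discriminate;
    try (intros [H | H]; [apply IHA1 in H | apply IHA2 in H]; lia); auto.
  rewrite existsb_exists. intros [u [Hu Hc]].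
  assert (max_sym_term u <= list_max (map max_sym_term l))
    by (apply le_list_max, in_map, Hu).
  apply sym_in_term_le in Hc. lia.
Qed.

Lemma exists_fresh_sym G D : exists c, fresh_in c G D.
Proof.
  exists (S (list_max (map max_sym_form (G ++ D)))). intros A HA.
  apply not_true_iff_false. intros Hc. apply sym_in_form_le in Hc.
  assert (max_sym_form A <= list_max (map max_sym_form (G ++ D)))
    by (apply le_list_max, in_map, in_or_app, HA).
  lia.
Qed.

Lemma is_axiom_rename s G D :
  is_axiom G D -> is_axiom (map (rename_form s) G) (map (rename_form s) D).
Proof.
  intros [HT | [A [HA [HG HD]]]].
  - left. exact (in_map (rename_form s) _ _ HT).
  - right. exists (rename_form s A). repeat split; try apply in_map; auto.
    destruct HA as [-> | HA]; [left; reflexivity | right; destruct A; easy].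
Qed.

Lemma cproof_rename s G D n :
  cproof G D n -> cproof (map (rename_form s) G) (map (rename_form s) D) n.
Proof.
  intros Hp. revert s.
  induction Hp as [G D Hax | G D D0 X n HP Hq IH | G D G0 B C n HP Hq IH
    | G D G0 B C n m HP Hq1 IH1 Hq2 IH2 | G D D0 B C n m HP Hq1 IH1 Hq2 IH2
    | G D D0 B C n HP Hq IH | G D G0 B C n m HP Hq1 IH1 Hq2 IH2 | G D D0 B C n HP Hq IH
    | G D G0 P t n HP Hq IH | G D D0 P t n HP Hq IH | G D G0 B c n HP HF Hq IH
    | G D D0 B c n HP HF Hq IH]; intros s.
  - apply cp_ax, is_axiom_rename, Hax.
  - eapply cp_botR; [exact (Permutation_map _ HP) | exact (IH s)].
  - eapply cp_andL; [exact (Permutation_map _ HP) | exact (IH s)].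
  - eapply cp_orL; [exact (Permutation_map _ HP) | exact (IH1 s) | exact (IH2 s)].
  - eapply cp_andR; [exact (Permutation_map _ HP) | exact (IH1 s) | exact (IH2 s)].
  - eapply cp_orR; [exact (Permutation_map _ HP) | exact (IH s)].
  - eapply cp_impL; [exact (Permutation_map _ HP) | exact (IH1 s) | exact (IH2 s)].
  - eapply cp_impR; [exact (Permutation_map _ HP) | exact (IH s)].
  - specialize (IH s). simpl in IH. rewrite rename_form_inst in IH.
    eapply cp_allL; [exact (Permutation_map _ HP) | exact IH].
  - specialize (IH s). simpl in IH. rewrite rename_form_inst in IH.
    eapply cp_exR; [exact (Permutation_map _ HP) | exact IH].
  - (* send the eigenconstant [c] to a symbol [e] fresh for the renamed conclusion *)
    destruct (exists_fresh_sym (map (rename_form s) G) (map (rename_form s) D)) as [e He].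
    apply (fresh_in_perm _ _ _ _ _ HP (Permutation_refl D)), fresh_in_avoids in HF
      as [HG0 HD]. inversion_clear HG0 as [| ? ? HB HG0'].
    specialize (IH (update_sym s c e)). simpl in IH.
    rewrite rename_inst_eigen, !map_rename_update in IH by assumption.
    eapply cp_exL; [exact (Permutation_map _ HP) | exact He | exact IH].
  - destruct (exists_fresh_sym (map (rename_form s) G) (map (rename_form s) D)) as [e He].
    apply (fresh_in_perm _ _ _ _ _ (Permutation_refl G) HP), fresh_in_avoids in HF
      as [HG HD0]. inversion_clear HD0 as [| ? ? HB HD0'].
    specialize (IH (update_sym s c e)). simpl in IH.
    rewrite rename_inst_eigen, !map_rename_update in IH by assumption.
    eapply cp_allR; [exact (Permutation_map _ HP) | exact He | exact IH].
Qed.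

Lemma map_rename_form_id L : map (rename_form (fun f => f)) L = L.
Proof. induction L; simpl; f_equal; auto using rename_form_id. Qed.

Lemma cproof_eigen_rename_l c d B G0 D n : fresh_in c (Ex B :: G0) D ->
  cproof (inst B (Fn c []) :: G0) D n -> cproof (inst B (Fn d []) :: G0) D n.
Proof.
  intros HF Hp. apply (cproof_rename (update_sym (fun f => f) c d)) in Hp.
  apply fresh_in_avoids in HF as [HG HD]. inversion_clear HG as [| ? ? HB HG0].
  simpl in Hp. rewrite rename_inst_eigen, !map_rename_update, rename_form_id,
    !map_rename_form_id in Hp by assumption.
  exact Hp.
Qed.

Lemma cproof_eigen_rename_r c d B G D0 n : fresh_in c G (All B :: D0) ->
  cproof G (inst B (Fn c []) :: D0) n -> cproof G (inst B (Fn d []) :: D0) n.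
Proof.
  intros HF Hp. apply (cproof_rename (update_sym (fun f => f) c d)) in Hp.
  apply fresh_in_avoids in HF as [HG HD]. inversion_clear HD as [| ? ? HB HD0].
  simpl in Hp. rewrite rename_inst_eigen, !map_rename_update, rename_form_id,
    !map_rename_form_id in Hp by assumption.
  exact Hp.
Qed.

(** * Covers *)

(* [left_covered G D A]: an occurrence of [A] in an antecedent is subsumed by
   [G --> D], either literally or through the premise(s) of its left rule:
   both components for [And], one premise for [Or] and [Imp] (the other
   branch is discarded), some eigenconstant for [Ex].  [All], whose rule
   keeps its principal formula, is covered only literally; dually on the
   right. *)
Inductive left_covered (G D : list form) : form -> Prop :=
| lc_in A : In A G -> left_covered G D A
| lc_and B C : left_covered G D B -> left_covered G D C -> left_covered G D (And B C)
| lc_or_l B C : left_covered G D B -> left_covered G D (Or B C)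
| lc_or_r B C : left_covered G D C -> left_covered G D (Or B C)
| lc_imp_l B C : right_covered G D B -> left_covered G D (Imp B C)
| lc_imp_r B C : left_covered G D C -> left_covered G D (Imp B C)
| lc_ex B c : left_covered G D (inst B (Fn c [])) -> left_covered G D (Ex B)
with right_covered (G D : list form) : form -> Prop :=
| rc_in A : In A D -> right_covered G D A
| rc_and_l B C : right_covered G D B -> right_covered G D (And B C)
| rc_and_r B C : right_covered G D C -> right_covered G D (And B C)
| rc_or B C : right_covered G D B -> right_covered G D C -> right_covered G D (Or B C)
| rc_imp B C : left_covered G D B -> right_covered G D C -> right_covered G D (Imp B C)
| rc_all B c : right_covered G D (inst B (Fn c [])) -> right_covered G D (All B).

Scheme left_covered_mut := Induction for left_covered Sort Prop
with right_covered_mut := Induction for right_covered Sort Prop.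
Combined Scheme covered_mutind from left_covered_mut, right_covered_mut.

Definition covered (G D G' D' : list form) : Prop :=
  Forall (left_covered G' D') G /\ Forall (right_covered G' D') D.

Lemma covered_incl G D G' D' : incl G G' -> incl D D' -> covered G D G' D'.
Proof.
  intros HG HD. split; apply Forall_forall; intros A HA; constructor; auto.
Qed.

Lemma cover_trans G1 D1 G2 D2 : covered G1 D1 G2 D2 ->
  (forall A, left_covered G1 D1 A -> left_covered G2 D2 A) /\
  (forall A, right_covered G1 D1 A -> right_covered G2 D2 A).
Proof.
  intros [HG HD]. rewrite Forall_forall in HG, HD.
  apply covered_mutind; intros; eauto using left_covered, right_covered.
Qed.

Lemma covered_trans G D G1 D1 G2 D2 :
  covered G D G1 D1 -> covered G1 D1 G2 D2 -> covered G D G2 D2.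
Proof.
  intros [HG HD] H12. destruct (cover_trans _ _ _ _ H12) as [HL HR].
  split; eapply Forall_impl; eauto.
Qed.

Lemma covered_weaken G D G' D' G'' D'' :
  covered G D G' D' -> incl G' G'' -> incl D' D'' -> covered G D G'' D''.
Proof. intros H HG HD. eapply covered_trans; [exact H | apply covered_incl; auto]. Qed.

Lemma covered_app G1 D1 G2 D2 G' D' :
  covered G1 D1 G' D' -> covered G2 D2 G' D' -> covered (G1 ++ G2) (D1 ++ D2) G' D'.
Proof. intros [H1 H2] [H3 H4]. split; apply Forall_app; auto. Qed.

Lemma covered_perm G D G1 D1 G' D' :
  Permutation G G1 -> Permutation D D1 -> covered G D G' D' -> covered G1 D1 G' D'.
Proof. intros HG HD [H1 H2]. split; eapply Permutation_Forall; eauto. Qed.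

Lemma covered_replay_l X G0 D G' G0' D' PG PD :
  Permutation G' (X :: G0') -> covered (X :: G0) D G' D' ->
  left_covered (PG ++ G0') (PD ++ D') X ->
  covered (PG ++ G0) (PD ++ D) (PG ++ G0') (PD ++ D').
Proof.
  intros HP [HG HD] HX. apply covered_app.
  - apply covered_incl; apply incl_appl, incl_refl.
  - eapply covered_trans; [split; [exact (Forall_inv_tail HG) | exact HD] |].
    apply (covered_perm (X :: G0') D' _ _ _ _ (Permutation_sym HP) (Permutation_refl _)).
    split; [constructor; [exact HX |] |]; apply Forall_forall; intros A HA;
      constructor; apply in_or_app; auto.
Qed.

Lemma covered_replay_r X G D0 G' D' D0' PG PD :
  Permutation D' (X :: D0') -> covered G (X :: D0) G' D' ->
  right_covered (PG ++ G') (PD ++ D0') X ->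
  covered (PG ++ G) (PD ++ D0) (PG ++ G') (PD ++ D0').
Proof.
  intros HP [HG HD] HX. apply covered_app.
  - apply covered_incl; apply incl_appl, incl_refl.
  - eapply covered_trans; [split; [exact HG | exact (Forall_inv_tail HD)] |].
    apply (covered_perm G' (X :: D0') _ _ _ _ (Permutation_refl _) (Permutation_sym HP)).
    split; [| constructor; [exact HX |]]; apply Forall_forall; intros A HA;
      constructor; apply in_or_app; auto.
Qed.

Lemma covered_skip_l X G0 D G' D' PG PD :
  covered (X :: G0) D G' D' -> covered PG PD G' D' -> covered (PG ++ G0) (PD ++ D) G' D'.
Proof.
  intros [HG HD] HP. apply covered_app; [exact HP | split; [exact (Forall_inv_tail HG) | exact HD]].
Qed.

Lemma covered_skip_r X G D0 G' D' PG PD :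
  covered G (X :: D0) G' D' -> covered PG PD G' D' -> covered (PG ++ G) (PD ++ D0) G' D'.
Proof.
  intros [HG HD] HP. apply covered_app; [exact HP | split; [exact HG | exact (Forall_inv_tail HD)]].
Qed.

Lemma left_covered_literal G D A :
  A = Bot \/ is_atomic A -> left_covered G D A -> In A G.
Proof. intros HA Hc. destruct Hc; auto; destruct HA; easy. Qed.

Lemma right_covered_literal G D A :
  A = Top \/ A = Bot \/ is_atomic A -> right_covered G D A -> In A D.
Proof. intros HA Hc. destruct Hc; auto; destruct HA as [| []]; easy. Qed.

Lemma right_covered_nonempty G D A : right_covered G D A -> D <> [].
Proof. induction 1; auto. intros ->. easy. Qed.

Lemma left_covered_and_inv G D B C : left_covered G D (And B C) ->
  In (And B C) G \/ left_covered G D B /\ left_covered G D C.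
Proof. inversion 1; auto. Qed.

Lemma left_covered_or_inv G D B C : left_covered G D (Or B C) ->
  In (Or B C) G \/ left_covered G D B \/ left_covered G D C.
Proof. inversion 1; auto. Qed.

Lemma left_covered_imp_inv G D B C : left_covered G D (Imp B C) ->
  In (Imp B C) G \/ right_covered G D B \/ left_covered G D C.
Proof. inversion 1; auto. Qed.

Lemma left_covered_all_inv G D B : left_covered G D (All B) -> In (All B) G.
Proof. inversion 1; auto. Qed.

Lemma left_covered_ex_inv G D B : left_covered G D (Ex B) ->
  In (Ex B) G \/ exists c, left_covered G D (inst B (Fn c [])).
Proof. inversion 1; eauto. Qed.

Lemma right_covered_and_inv G D B C : right_covered G D (And B C) ->
  In (And B C) D \/ right_covered G D B \/ right_covered G D C.
Proof. inversion 1; auto. Qed.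

Lemma right_covered_or_inv G D B C : right_covered G D (Or B C) ->
  In (Or B C) D \/ right_covered G D B /\ right_covered G D C.
Proof. inversion 1; auto. Qed.

Lemma right_covered_imp_inv G D B C : right_covered G D (Imp B C) ->
  In (Imp B C) D \/ left_covered G D B /\ right_covered G D C.
Proof. inversion 1; auto. Qed.

Lemma right_covered_all_inv G D B : right_covered G D (All B) ->
  In (All B) D \/ exists c, right_covered G D (inst B (Fn c [])).
Proof. inversion 1; eauto. Qed.

Lemma right_covered_ex_inv G D B : right_covered G D (Ex B) -> In (Ex B) D.
Proof. inversion 1; auto. Qed.

Lemma is_axiom_covered G D G' D' : is_axiom G D -> covered G D G' D' -> is_axiom G' D'.
Proof.
  intros [HT | [A [HA [HG HD]]]] [CG CD]; rewrite Forall_forall in CG, CD.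
  - left. apply (right_covered_literal G' D'); auto.
  - right. exists A. split; [exact HA |].
    split; [apply (left_covered_literal G' D') | apply (right_covered_literal G' D')]; auto.
Qed.

(** * Height-preserving admissibility of covers *)

Definition provable_within (G D : list form) (h : nat) : Prop :=
  exists h', h' <= h /\ cproof G D h'.

Lemma provable_within_mono G D n m :
  n <= m -> provable_within G D n -> provable_within G D m.
Proof. intros Hnm [k [Hk Hp]]. exists k. split; [lia | exact Hp]. Qed.

Lemma provable_within_rule1 G1 D1 G D n m :
  (forall k, cproof G1 D1 k -> cproof G D (S k)) ->
  provable_within G1 D1 n -> S n <= m -> provable_within G D m.
Proof. intros R [k [Hk Hp]] Hm. exists (S k). split; [lia | exact (R k Hp)]. Qed.

Lemma provable_within_rule2 G1 D1 G2 D2 G D n1 n2 m :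
  (forall k1 k2, cproof G1 D1 k1 -> cproof G2 D2 k2 -> cproof G D (S (max k1 k2))) ->
  provable_within G1 D1 n1 -> provable_within G2 D2 n2 -> S (max n1 n2) <= m ->
  provable_within G D m.
Proof.
  intros R [k1 [Hk1 Hp1]] [k2 [Hk2 Hp2]] Hm. exists (S (max k1 k2)).
  split; [lia | exact (R k1 k2 Hp1 Hp2)].
Qed.

Lemma drop_bot_r_axiom G D D1 :
  is_axiom G D -> Permutation D (Bot :: D1) -> D1 <> [] -> provable_within G D1 2.
Proof.
  intros [HT | [A [HA [HG HD]]]] HP HD1.
  - exists 1. split; [lia |]. apply cp_ax. left.
    destruct (Permutation_in _ HP HT) as [E | HT1]; [discriminate | exact HT1].
  - destruct (Permutation_in _ HP HD) as [<- | HA1].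
    + destruct D1 as [| Y D2]; [contradiction |]. exists 2. split; [lia |].
      apply (cp_botR _ _ D2 Y); [reflexivity |].
      apply cp_ax. right. exists Bot. simpl. auto.
    + exists 1. split; [lia |]. apply cp_ax. right. exists A. auto.
Qed.

Definition cover_admissible_at (h : nat) : Prop :=
  forall G D G' D', cproof G D h -> covered G D G' D' -> provable_within G' D' h.

Lemma cover_axiom G D G' D' :
  is_axiom G D -> covered G D G' D' -> provable_within G' D' 1.
Proof.
  intros Hax Hcov. exists 1. split; [lia | exact (cp_ax _ _ (is_axiom_covered _ _ _ _ Hax Hcov))].
Qed.

Ltac solve_cover :=
  unfold covered; simpl; repeat split;
  eauto 7 using Forall, left_covered, right_covered, in_eq, in_cons.

Section CoverStep.

Variable h : nat.
Hypothesis IH : forall n, n < h -> cover_admissible_at n.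

Lemma drop_bot_r G D D1 k : cproof G D k -> k <= h ->
  Permutation D (Bot :: D1) -> D1 <> [] -> provable_within G D1 (S k).
Proof.
  intros Hp. revert D1.
  induction Hp as [G D Hax | G D D0 X n HP Hq IHq | G D G0 B C n HP Hq IHq
    | G D G0 B C n m HP Hq1 IHq1 Hq2 IHq2 | G D D0 B C n m HP Hq1 IHq1 Hq2 IHq2
    | G D D0 B C n HP Hq IHq | G D G0 B C n m HP Hq1 IHq1 Hq2 IHq2 | G D D0 B C n HP Hq IHq
    | G D G0 P t n HP Hq IHq | G D D0 P t n HP Hq IHq | G D G0 B c n HP HF Hq IHq
    | G D D0 B c n HP HF Hq IHq];
    intros D1 Hk HD HD1;
    try (destruct (Permutation_cons_cons_inv _ _ _ _ (perm_trans (Permutation_sym HP) HD))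
      as [[E HD0] | [D3 [HD0 HD3]]]; [try discriminate E |]).
  - apply (provable_within_mono _ _ 2); [lia | exact (drop_bot_r_axiom _ _ _ Hax HD HD1)].
  - subst X. apply (provable_within_mono _ _ (S n)); [lia |].
    exact (IHq D1 ltac:(lia) (perm_skip Bot HD0) HD1).
  - (* contract the two copies of [Bot] in the premise *)
    apply (provable_within_rule1 _ _ _ _ n _ (fun k => cp_botR _ _ _ _ k HD3)); [| lia].
    apply (IH n ltac:(lia) _ _ _ _ Hq), covered_incl; [apply incl_refl |].
    apply incl_cons; [apply in_eq | intros A HA; exact (Permutation_in _ HD0 HA)].
  - apply (provable_within_rule1 _ _ _ _ _ _ (fun k => cp_andL _ _ _ _ _ k HP)
      (IHq D1 ltac:(lia) HD HD1)); lia.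
  - apply (provable_within_rule2 _ _ _ _ _ _ _ _ _ (fun k1 k2 => cp_orL _ _ _ _ _ k1 k2 HP)
      (IHq1 D1 ltac:(lia) HD HD1) (IHq2 D1 ltac:(lia) HD HD1)); lia.
  - apply (provable_within_rule2 _ _ _ _ _ _ _ _ _ (fun k1 k2 => cp_andR _ _ _ _ _ k1 k2 HD3)
      (IHq1 (B :: D3) ltac:(lia) (Permutation_cons_under B HD0) ltac:(discriminate))
      (IHq2 (C :: D3) ltac:(lia) (Permutation_cons_under C HD0) ltac:(discriminate))); lia.
  - apply (provable_within_rule1 _ _ _ _ _ _ (fun k => cp_orR _ _ _ _ _ k HD3)
      (IHq (B :: C :: D3) ltac:(lia)
        (Permutation_cons_under B (Permutation_cons_under C HD0)) ltac:(discriminate))); lia.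
  - apply (provable_within_rule2 _ _ _ _ _ _ _ _ _ (fun k1 k2 => cp_impL _ _ _ _ _ k1 k2 HP)
      (IHq1 (B :: D1) ltac:(lia) (Permutation_cons_under B HD) ltac:(discriminate))
      (IHq2 D1 ltac:(lia) HD HD1)); lia.
  - apply (provable_within_rule1 _ _ _ _ _ _ (fun k => cp_impR _ _ _ _ _ k HD3)
      (IHq (C :: D3) ltac:(lia) (Permutation_cons_under C HD0) ltac:(discriminate))); lia.
  - apply (provable_within_rule1 _ _ _ _ _ _ (fun k => cp_allL _ _ _ _ _ k HP)
      (IHq D1 ltac:(lia) HD HD1)); lia.
  - apply (provable_within_rule1 _ _ _ _ _ _ (fun k => cp_exR _ _ _ _ t k HD3)
      (IHq (Ex P :: inst P t :: D3) ltac:(lia)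
        (Permutation_cons_under _ (Permutation_cons_under _ HD0)) ltac:(discriminate))); lia.
  - pose proof (fresh_in_perm_tail_r _ _ _ _ _ HD HF) as HF1.
    apply (provable_within_rule1 _ _ _ _ _ _ (fun k => cp_exL _ _ _ _ _ k HP HF1)
      (IHq D1 ltac:(lia) HD HD1)); lia.
  - pose proof (fresh_in_perm_tail_r _ _ _ _ _ HD HF) as HF1.
    apply (provable_within_rule1 _ _ _ _ _ _ (fun k => cp_allR _ _ _ _ _ k HD3 HF1)
      (IHq (inst B (Fn c []) :: D3) ltac:(lia) (Permutation_cons_under _ HD0)
        ltac:(discriminate))); lia.
Qed.

Lemma cover_within G D G' D' n m :
  n < h -> n <= m -> cproof G D n -> covered G D G' D' -> provable_within G' D' m.
Proof. intros Hn Hm Hp Hc. exact (provable_within_mono _ _ _ _ Hm (IH n Hn _ _ _ _ Hp Hc)). Qed.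

Lemma cover_botR G D D0 X G' D' n : Permutation D (X :: D0) ->
  cproof G (Bot :: D0) n -> n < h -> covered G D G' D' -> provable_within G' D' (S n).
Proof.
  intros HP Hq Hn Hcov. apply (covered_perm _ _ _ _ _ _ (Permutation_refl G) HP) in Hcov.
  (* [X] may be covered without occurring in [D'], so ⊥-R cannot be replayed;
     prove [G' --> Bot :: D'] instead and remove [Bot]. *)
  pose proof (right_covered_nonempty _ _ _ (Forall_inv (proj2 Hcov))) as HD'.
  destruct (IH n Hn _ _ G' (Bot :: D') Hq) as [n1 [Hn1 Hq1]].
  - apply (covered_skip_r X _ _ _ _ [] [Bot]); [| solve_cover].
    eapply covered_weaken; [exact Hcov | apply incl_refl | apply incl_tl, incl_refl].
  - apply (provable_within_mono _ _ (S n1)); [lia |].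
    exact (drop_bot_r _ _ _ _ Hq1 ltac:(lia) (Permutation_refl _) HD').
Qed.

Lemma cover_andL G D G0 B C G' D' n : Permutation G (And B C :: G0) ->
  cproof (B :: C :: G0) D n -> n < h -> covered G D G' D' -> provable_within G' D' (S n).
Proof.
  intros HP Hq Hn Hcov. apply (covered_perm _ _ _ _ _ _ HP (Permutation_refl D)) in Hcov.
  destruct (left_covered_and_inv _ _ _ _ (Forall_inv (proj1 Hcov))) as [Hin | [HB HC]].
  - destruct (in_perm _ _ Hin) as [G0' HG'].
    apply (provable_within_rule1 _ _ _ _ n _ (fun k => cp_andL _ _ _ _ _ k HG')); [| lia].
    apply (IH n Hn _ _ _ _ Hq), (covered_replay_l _ _ _ _ _ _ [B; C] [] HG' Hcov).
    solve_cover.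
  - apply (cover_within _ _ _ _ n (S n) Hn ltac:(lia) Hq),
      (covered_skip_l _ _ _ _ _ [B; C] [] Hcov). solve_cover.
Qed.

Lemma cover_orL G D G0 B C G' D' n m : Permutation G (Or B C :: G0) ->
  cproof (B :: G0) D n -> cproof (C :: G0) D m -> n < h -> m < h ->
  covered G D G' D' -> provable_within G' D' (S (max n m)).
Proof.
  intros HP Hq1 Hq2 Hn Hm Hcov.
  apply (covered_perm _ _ _ _ _ _ HP (Permutation_refl D)) in Hcov.
  destruct (left_covered_or_inv _ _ _ _ (Forall_inv (proj1 Hcov))) as [Hin | [HB | HC]].
  - destruct (in_perm _ _ Hin) as [G0' HG'].
    apply (provable_within_rule2 _ _ _ _ _ _ n m _ (fun k1 k2 => cp_orL _ _ _ _ _ k1 k2 HG'));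
      [| | lia].
    + apply (IH n Hn _ _ _ _ Hq1), (covered_replay_l _ _ _ _ _ _ [B] [] HG' Hcov). solve_cover.
    + apply (IH m Hm _ _ _ _ Hq2), (covered_replay_l _ _ _ _ _ _ [C] [] HG' Hcov). solve_cover.
  - apply (cover_within _ _ _ _ n (S (max n m)) Hn ltac:(lia) Hq1),
      (covered_skip_l _ _ _ _ _ [B] [] Hcov). solve_cover.
  - apply (cover_within _ _ _ _ m (S (max n m)) Hm ltac:(lia) Hq2),
      (covered_skip_l _ _ _ _ _ [C] [] Hcov). solve_cover.
Qed.

Lemma cover_andR G D D0 B C G' D' n m : Permutation D (And B C :: D0) ->
  cproof G (B :: D0) n -> cproof G (C :: D0) m -> n < h -> m < h ->
  covered G D G' D' -> provable_within G' D' (S (max n m)).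
Proof.
  intros HP Hq1 Hq2 Hn Hm Hcov.
  apply (covered_perm _ _ _ _ _ _ (Permutation_refl G) HP) in Hcov.
  destruct (right_covered_and_inv _ _ _ _ (Forall_inv (proj2 Hcov))) as [Hin | [HB | HC]].
  - destruct (in_perm _ _ Hin) as [D0' HD'].
    apply (provable_within_rule2 _ _ _ _ _ _ n m _ (fun k1 k2 => cp_andR _ _ _ _ _ k1 k2 HD'));
      [| | lia].
    + apply (IH n Hn _ _ _ _ Hq1), (covered_replay_r _ _ _ _ _ _ [] [B] HD' Hcov). solve_cover.
    + apply (IH m Hm _ _ _ _ Hq2), (covered_replay_r _ _ _ _ _ _ [] [C] HD' Hcov). solve_cover.
  - apply (cover_within _ _ _ _ n (S (max n m)) Hn ltac:(lia) Hq1),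
      (covered_skip_r _ _ _ _ _ [] [B] Hcov). solve_cover.
  - apply (cover_within _ _ _ _ m (S (max n m)) Hm ltac:(lia) Hq2),
      (covered_skip_r _ _ _ _ _ [] [C] Hcov). solve_cover.
Qed.

Lemma cover_orR G D D0 B C G' D' n : Permutation D (Or B C :: D0) ->
  cproof G (B :: C :: D0) n -> n < h -> covered G D G' D' -> provable_within G' D' (S n).
Proof.
  intros HP Hq Hn Hcov. apply (covered_perm _ _ _ _ _ _ (Permutation_refl G) HP) in Hcov.
  destruct (right_covered_or_inv _ _ _ _ (Forall_inv (proj2 Hcov))) as [Hin | [HB HC]].
  - destruct (in_perm _ _ Hin) as [D0' HD'].
    apply (provable_within_rule1 _ _ _ _ n _ (fun k => cp_orR _ _ _ _ _ k HD')); [| lia].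
    apply (IH n Hn _ _ _ _ Hq), (covered_replay_r _ _ _ _ _ _ [] [B; C] HD' Hcov).
    solve_cover.
  - apply (cover_within _ _ _ _ n (S n) Hn ltac:(lia) Hq),
      (covered_skip_r _ _ _ _ _ [] [B; C] Hcov). solve_cover.
Qed.

Lemma cover_impL G D G0 B C G' D' n m : Permutation G (Imp B C :: G0) ->
  cproof G0 (B :: D) n -> cproof (C :: G0) D m -> n < h -> m < h ->
  covered G D G' D' -> provable_within G' D' (S (max n m)).
Proof.
  intros HP Hq1 Hq2 Hn Hm Hcov.
  apply (covered_perm _ _ _ _ _ _ HP (Permutation_refl D)) in Hcov.
  destruct (left_covered_imp_inv _ _ _ _ (Forall_inv (proj1 Hcov))) as [Hin | [HB | HC]].
  - destruct (in_perm _ _ Hin) as [G0' HG'].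
    apply (provable_within_rule2 _ _ _ _ _ _ n m _ (fun k1 k2 => cp_impL _ _ _ _ _ k1 k2 HG'));
      [| | lia].
    + apply (IH n Hn _ _ _ _ Hq1), (covered_replay_l _ _ _ _ _ _ [] [B] HG' Hcov). solve_cover.
    + apply (IH m Hm _ _ _ _ Hq2), (covered_replay_l _ _ _ _ _ _ [C] [] HG' Hcov). solve_cover.
  - apply (cover_within _ _ _ _ n (S (max n m)) Hn ltac:(lia) Hq1),
      (covered_skip_l _ _ _ _ _ [] [B] Hcov). solve_cover.
  - apply (cover_within _ _ _ _ m (S (max n m)) Hm ltac:(lia) Hq2),
      (covered_skip_l _ _ _ _ _ [C] [] Hcov). solve_cover.
Qed.

Lemma cover_impR G D D0 B C G' D' n : Permutation D (Imp B C :: D0) ->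
  cproof (B :: G) (C :: D0) n -> n < h -> covered G D G' D' -> provable_within G' D' (S n).
Proof.
  intros HP Hq Hn Hcov. apply (covered_perm _ _ _ _ _ _ (Permutation_refl G) HP) in Hcov.
  destruct (right_covered_imp_inv _ _ _ _ (Forall_inv (proj2 Hcov))) as [Hin | [HB HC]].
  - destruct (in_perm _ _ Hin) as [D0' HD'].
    apply (provable_within_rule1 _ _ _ _ n _ (fun k => cp_impR _ _ _ _ _ k HD')); [| lia].
    apply (IH n Hn _ _ _ _ Hq), (covered_replay_r _ _ _ _ _ _ [B] [C] HD' Hcov).
    solve_cover.
  - apply (cover_within _ _ _ _ n (S n) Hn ltac:(lia) Hq),
      (covered_skip_r _ _ _ _ _ [B] [C] Hcov). solve_cover.
Qed.

Lemma cover_allL G D G0 P t G' D' n : Permutation G (All P :: G0) ->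
  cproof (All P :: inst P t :: G0) D n -> n < h -> covered G D G' D' ->
  provable_within G' D' (S n).
Proof.
  intros HP Hq Hn Hcov. apply (covered_perm _ _ _ _ _ _ HP (Permutation_refl D)) in Hcov.
  destruct (in_perm _ _ (left_covered_all_inv _ _ _ (Forall_inv (proj1 Hcov)))) as [G0' HG'].
  apply (provable_within_rule1 _ _ _ _ n _ (fun k => cp_allL _ _ _ _ t k HG')); [| lia].
  apply (IH n Hn _ _ _ _ Hq), (covered_replay_l _ _ _ _ _ _ [All P; inst P t] [] HG' Hcov).
  solve_cover.
Qed.

Lemma cover_exR G D D0 P t G' D' n : Permutation D (Ex P :: D0) ->
  cproof G (Ex P :: inst P t :: D0) n -> n < h -> covered G D G' D' ->
  provable_within G' D' (S n).
Proof.
  intros HP Hq Hn Hcov. apply (covered_perm _ _ _ _ _ _ (Permutation_refl G) HP) in Hcov.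
  destruct (in_perm _ _ (right_covered_ex_inv _ _ _ (Forall_inv (proj2 Hcov)))) as [D0' HD'].
  apply (provable_within_rule1 _ _ _ _ n _ (fun k => cp_exR _ _ _ _ t k HD')); [| lia].
  apply (IH n Hn _ _ _ _ Hq), (covered_replay_r _ _ _ _ _ _ [] [Ex P; inst P t] HD' Hcov).
  solve_cover.
Qed.

Lemma cover_exL G D G0 B c G' D' n : Permutation G (Ex B :: G0) -> fresh_in c G D ->
  cproof (inst B (Fn c []) :: G0) D n -> n < h -> covered G D G' D' ->
  provable_within G' D' (S n).
Proof.
  intros HP HF Hq Hn Hcov. apply (covered_perm _ _ _ _ _ _ HP (Permutation_refl D)) in Hcov.
  apply (fresh_in_perm _ _ _ _ _ HP (Permutation_refl D)) in HF.
  destruct (left_covered_ex_inv _ _ _ (Forall_inv (proj1 Hcov))) as [Hin | [d Hd]].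
  - destruct (in_perm _ _ Hin) as [G0' HG']. destruct (exists_fresh_sym G' D') as [e He].
    apply (provable_within_rule1 _ _ _ _ n _ (fun k => cp_exL _ _ _ _ _ k HG' He)); [| lia].
    apply (IH n Hn _ _ _ _ (cproof_eigen_rename_l c e _ _ _ _ HF Hq)),
      (covered_replay_l _ _ _ _ _ _ [inst B (Fn e [])] [] HG' Hcov). solve_cover.
  - apply (cover_within _ _ _ _ n (S n) Hn ltac:(lia) (cproof_eigen_rename_l c d _ _ _ _ HF Hq)),
      (covered_skip_l _ _ _ _ _ [inst B (Fn d [])] [] Hcov). solve_cover.
Qed.

Lemma cover_allR G D D0 B c G' D' n : Permutation D (All B :: D0) -> fresh_in c G D ->
  cproof G (inst B (Fn c []) :: D0) n -> n < h -> covered G D G' D' ->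
  provable_within G' D' (S n).
Proof.
  intros HP HF Hq Hn Hcov. apply (covered_perm _ _ _ _ _ _ (Permutation_refl G) HP) in Hcov.
  apply (fresh_in_perm _ _ _ _ _ (Permutation_refl G) HP) in HF.
  destruct (right_covered_all_inv _ _ _ (Forall_inv (proj2 Hcov))) as [Hin | [d Hd]].
  - destruct (in_perm _ _ Hin) as [D0' HD']. destruct (exists_fresh_sym G' D') as [e He].
    apply (provable_within_rule1 _ _ _ _ n _ (fun k => cp_allR _ _ _ _ _ k HD' He)); [| lia].
    apply (IH n Hn _ _ _ _ (cproof_eigen_rename_r c e _ _ _ _ HF Hq)),
      (covered_replay_r _ _ _ _ _ _ [] [inst B (Fn e [])] HD' Hcov). solve_cover.
  - apply (cover_within _ _ _ _ n (S n) Hn ltac:(lia) (cproof_eigen_rename_r c d _ _ _ _ HF Hq)),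
      (covered_skip_r _ _ _ _ _ [] [inst B (Fn d [])] Hcov). solve_cover.
Qed.

Lemma cover_admissible_le G D G' D' k :
  cproof G D k -> k <= h -> covered G D G' D' -> provable_within G' D' k.
Proof.
  intros Hp. destruct Hp; intros Hk Hcov;
    [ eapply cover_axiom | eapply cover_botR | eapply cover_andL | eapply cover_orL
    | eapply cover_andR | eapply cover_orR | eapply cover_impL | eapply cover_impR
    | eapply cover_allL | eapply cover_exR | eapply cover_exL | eapply cover_allR ];
    solve [eassumption | lia].
Qed.

End CoverStep.

Theorem cover_admissible h : cover_admissible_at h.
Proof.
  induction h as [h IH] using lt_wf_ind. intros G D G' D' Hp.
  exact (cover_admissible_le h IH G D G' D' h Hp (le_n h)).
Qed.

Theorem lemma2 (G D G' D' : list form) (h : nat) :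
  cproof G D h -> set_incl G G' -> set_incl D D' ->
  exists h', h' <= h /\ cproof G' D' h'.
Proof.
  intros Hp HG HD. exact (cover_admissible h G D G' D' Hp (covered_incl _ _ _ _ HG HD)).
Qed.
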